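(* Let $q>1$ be a fixed integer and $c>0$. There exists a constant $C>0$ (depending only on $q$ and $c$) such that for all $n\in\mathbb{N}$ and $p\in(0,1)$ with $np\ge c$ (i.e. $p^{-1}\lesssim n$), a random variable $B\sim\mathrm{Bin}(n,p)$ satisfies $$\mathbb{E}\Big[\mathbb{I}\{B>0\}\Big(\frac1B-\frac1{np}\Big)^q\Big]\le C\,(np)^{-3q/2}.$$ *)

From HB Require Import structures.
From mathcomp Require Import all_boot all_order all_algebra.
From mathcomp Require Import reals exp.
Set Implicit Arguments. Unset Strict Implicit. Unset Printing Implicit Defensive.
Import Order.TTheory GRing.Theory Num.Theory.
Local Open Scope ring_scope.

Definition binom_expect (R : realType) (n : nat) (p : R) (f : nat -> R) : R :=
  \sum_(k < n.+1) ('C(n, k))%:R * p ^+ k * (1 - p) ^+ (n - k) * f k.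

Definition inv_dev (R : realType) (n : nat) (p : R) (q : nat) (k : nat) : R :=
  if (0 < k)%N then (k%:R^-1 - (n%:R * p)^-1) ^+ q else 0.

(* With mu = n p, on {B = k > 0} we have (1/k - 1/mu)^q <= |mu - k|^q / (k mu)^q.
   Size biasing, E[B g(B)] = mu E[g(B' + 1)], applied q times trades the factor
   k^-q for mu^-q at the cost of a constant, leaving mu^-2q times the q-th absolute
   moment of mu - (B'' - q) with B'' ~ Bin(n + q, p).  That moment is O(mu^(q/2)):
   bound |x|^q by q! s^-q (e^(s x) + e^(-s x)) and use the binomial moment generating
   function with s of order mu^(-1/2).  Altogether mu^-2q mu^(q/2) = mu^(-3q/2). *)

From HB Require Import structures.
From mathcomp Require Import all_boot all_order all_algebra.
From mathcomp Require Import reals exp sequences.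
From mathcomp Require Import ring lra zify.
Set Implicit Arguments.
Unset Strict Implicit.
Unset Printing Implicit Defensive.

Import Order.TTheory GRing.Theory Num.Theory.
Local Open Scope ring_scope.

Section binomial_expectation.
Variable R : realType.
Implicit Types (p : R) (f g : nat -> R).

Lemma ler_binom_expect n p f g : 0 <= p <= 1 ->
    (forall k, (k <= n)%N -> f k <= g k) ->
  binom_expect n p f <= binom_expect n p g.
Proof.
move=> /andP[p0 p1] le_fg; apply: ler_sum => k _.
apply: ler_wpM2l; last by apply: le_fg; rewrite -ltnS.
by rewrite !mulr_ge0 ?exprn_ge0 ?subr_ge0.
Qed.

Lemma binom_expect_ge0 n p f : 0 <= p <= 1 -> (forall k, 0 <= f k) ->
  0 <= binom_expect n p f.
Proof.
move=> p01 f_ge0; have := @ler_binom_expect n p (fun=> 0) f p01 (fun k _ => f_ge0 k).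
by rewrite {1}/binom_expect big1 // => k _; rewrite mulr0.
Qed.

Lemma binom_expectZ n p a f :
  binom_expect n p (fun k => a * f k) = a * binom_expect n p f.
Proof. by rewrite /binom_expect mulr_sumr; apply: eq_bigr => k _; ring. Qed.

Lemma binom_expectD n p f g :
  binom_expect n p (fun k => f k + g k) = binom_expect n p f + binom_expect n p g.
Proof. by rewrite /binom_expect -big_split; apply: eq_bigr => k _ /=; ring. Qed.

(* Size biasing: E[B g(B)] = n p E[g(B' + 1)] for B ~ Bin(n, p), B' ~ Bin(n - 1, p). *)
Lemma binom_expect_shift n p f :
  n.+1%:R * p * binom_expect n p (fun k => f k / k.+1%:R) =
  binom_expect n.+1 p (fun k => if k is k'.+1 then f k' else 0).
Proof.
rewrite /binom_expect [RHS]big_ord_recl mulr0 add0r mulr_sumr.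
apply: eq_bigr => k _ /=; rewrite /bump /= add1n add0n subSS exprS.
have k1_neq0 : k.+1%:R != 0 :> R by rewrite pnatr_eq0.
have bin_diag : n.+1%:R * 'C(n, k)%:R = k.+1%:R * 'C(n.+1, k.+1)%:R :> R.
  by rewrite -!natrM mul_bin_diag.
transitivity (n.+1%:R * 'C(n, k)%:R * (p * p ^+ k) * (1 - p) ^+ (n - k) * f k / k.+1%:R).
  by ring.
by rewrite bin_diag; field; rewrite -natr1 addrC in k1_neq0.
Qed.

Lemma binom_expect_expR n p t :
  binom_expect n p (fun k => expR (t * k%:R)) = (1 - p + p * expR t) ^+ n.
Proof.
rewrite exprDn; apply: eq_bigr => k _.
by rewrite expRM_natr exprMn -mulr_natl; ring.
Qed.

Lemma binom_expect_expR_le n p t : 0 <= p <= 1 ->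
  binom_expect n p (fun k => expR (t * k%:R)) <= expR (n%:R * p * (expR t - 1)).
Proof.
move=> /andP[p0 p1]; rewrite binom_expect_expR -mulrA [n%:R * _]mulrC expRM_natr.
apply: lerXn2r; rewrite ?nnegrE ?expR_ge0 //.
  by have := expR_ge0 t; nra.
by apply: le_trans (expR_ge1Dx _); lra.
Qed.

End binomial_expectation.

Section exponential_bounds.
Variable R : realType.
Implicit Types (s t x y : R).

Lemma exprn_le_expR (q : nat) y : 0 <= y -> y ^+ q <= q`!%:R * expR y.
Proof.
move=> y_ge0; case: q => [|q]; first by rewrite mul1r; have := expR_ge1Dx y; lra.
have := expR_ge1Dxn q y_ge0; have := expR_ge0 y.
have qfact_gt0 : 0 < q.+1`!%:R :> R by rewrite ltr0n fact_gt0.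
rewrite -ler_pdivrMl // mulrC; lra.
Qed.

Lemma normrX_le_expR (q : nat) s x : 0 < s ->
  `|x| ^+ q <= q`!%:R / s ^+ q * (expR (s * x) + expR (- (s * x))).
Proof.
move=> s_gt0; have sq_gt0 : 0 < s ^+ q by rewrite exprn_gt0.
have sx_ge0 : 0 <= s * `|x| := mulr_ge0 (ltW s_gt0) (normr_ge0 x).
have := exprn_le_expR q sx_ge0; rewrite exprMn => /le_trans le_sx.
rewrite mulrAC ler_pdivlMr // mulrC; apply: le_sx.
apply: ler_wpM2l; first by rewrite ler0n.
have := expR_ge0 (s * x); have := expR_ge0 (- (s * x)).
case: (lerP 0 x) => [x_ge0|x_lt0].
  by rewrite ger0_norm //; lra.
by rewrite ltr0_norm // mulrN; lra.
Qed.

(* expR t * (1 - t) <= expR t * expR (- t) = 1, and 1 / (1 - t) <= 1 + t + 2 t^2 for t <= 1/2. *)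
Lemma expR_le_quadratic t : t <= 1 / 2 -> expR t <= 1 + t + 2 * t ^+ 2.
Proof.
move=> t_le; have := expR_ge1Dx (- t); have := expR_gt0 t.
have inv : expR t * expR (- t) = 1 by rewrite -expRD subrr expR0.
nra.
Qed.

End exponential_bounds.

Section binomial_moments.
Variable R : realType.
Implicit Types (p s t : R).

Lemma binom_expect_expR_centered_le n q p t : 0 <= p <= 1 -> `|t| <= 1 / 2 ->
  expR (- (t * (n%:R * p))) * binom_expect (n + q) p (fun k => expR (t * k%:R)) <=
  expR (2 * (n%:R * p) * t ^+ 2 + q%:R).
Proof.
move=> p01 t_le; have /andP[p_ge0 p_le1] := p01.
apply: le_trans (ler_wpM2l (expR_ge0 _) (binom_expect_expR_le _ t p01)) _.
rewrite -expRD ler_expR natrD mulrDl.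
set mu := n%:R * p; set e := expR t.
have mu_ge0 : 0 <= mu by rewrite mulr_ge0 ?ler0n.
have [t_lo t_hi] : - (1 / 2) <= t /\ t <= 1 / 2.
  by move: t_le; rewrite ler_norml => /andP[].
have e_le : e <= 1 + t + 2 * t ^+ 2 := expR_le_quadratic t_hi.
have e_gt0 : 0 < e := expR_gt0 t.
have e_le2 : e <= 2 by nra.
have qp_ge0 : 0 <= q%:R * p by rewrite mulr_ge0 ?ler0n.
have qp_le : q%:R * p <= q%:R by rewrite ler_piMr ?ler0n.
nra.
Qed.

Lemma binom_expect_centered_moment_le n q p s : 0 <= p <= 1 -> 0 < s -> s <= 1 / 2 ->
  binom_expect (n + q) p (fun k => `|n%:R * p - (k - q)%N%:R| ^+ q) <=
  q`!%:R / s ^+ q * (2 * expR (2 * (n%:R * p) * s ^+ 2 + 2 * q%:R)).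
Proof.
move=> p01 s_gt0 s_le; set mu := n%:R * p.
have cst_ge0 : 0 <= q`!%:R / s ^+ q by rewrite divr_ge0 ?ler0n ?exprn_ge0 ?ltW.
apply: (@le_trans _ _ (binom_expect (n + q) p (fun k => q`!%:R / s ^+ q *
    (expR (s * q%:R) * (expR (- (- s * mu)) * expR (- s * k%:R)) +
     expR (- (s * mu)) * expR (s * k%:R))))).
  apply: ler_binom_expect => // k _.
  apply: le_trans (normrX_le_expR q _ s_gt0) _.
  apply: ler_wpM2l => //; rewrite -!expRD.
  have k_le : k%:R <= (k - q)%N%:R + q%:R :> R by rewrite -natrD ler_nat; lia.
  have k_ge : (k - q)%N%:R <= k%:R :> R by rewrite ler_nat; lia.
  by apply: lerD; rewrite ler_expR; nra.
rewrite binom_expectZ binom_expectD !binom_expectZ; apply: ler_wpM2l => //.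
have abs_s : `|s| <= 1 / 2 by rewrite gtr0_norm.
have abs_Ns : `|- s| <= 1 / 2 by rewrite normrN gtr0_norm.
have := binom_expect_expR_centered_le n q p01 abs_s.
have := binom_expect_expR_centered_le n q p01 abs_Ns.
rewrite sqrrN -/mu => lo hi.
have sq_le : expR (s * q%:R) <= expR q%:R.
  by rewrite ler_expR ler_piMl ?ler0n //; lra.
have -> : expR (2 * mu * s ^+ 2 + 2 * q%:R) = expR q%:R * expR (2 * mu * s ^+ 2 + q%:R).
  by rewrite -expRD; congr expR; ring.
have q_ge1 : 1 <= expR (q%:R : R).
  by have := expR_ge1Dx (q%:R : R); have := ler0n R q; lra.
have lo_ge0 : 0 <= expR (- (- s * mu)) *
    binom_expect (n + q) p (fun k => expR (- s * k%:R)).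
  by rewrite mulr_ge0 ?expR_ge0 ?binom_expect_ge0 // => k; rewrite expR_ge0.
have := expR_ge0 (s * q%:R); have := expR_ge0 (2 * mu * s ^+ 2 + q%:R).
nra.
Qed.

End binomial_moments.

Section inverse_moments.
Variable R : realType.
Implicit Types (p : R) (h : nat -> R).

Definition div_kpow (j : nat) h (k : nat) : R :=
  if (0 < k)%N then h k / k%:R ^+ j else 0.

Lemma div_kpowS_le j h k : 0 <= h k ->
  div_kpow j.+1 h k <= 2 * (div_kpow j h k / k.+1%:R).
Proof.
rewrite /div_kpow; case: k => [|k] /= h_ge0; first by rewrite mul0r mulr0.
have -> : h k.+1 / k.+1%:R ^+ j.+1 = h k.+1 / k.+1%:R ^+ j * k.+1%:R^-1.
  by rewrite exprSr invfM mulrA.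
rewrite mulrCA; apply: ler_wpM2l; first by rewrite divr_ge0 ?exprn_ge0.
have k1_ge1 : 1 <= k.+1%:R :> R by rewrite ler1n.
rewrite -[k.+2]addn1 natrD -[2 / _]invf_div lef_pV2 ?posrE; lra.
Qed.

Lemma div_kpow_pred_le j h k : (forall k, 0 <= h k) ->
  (if k is k'.+1 then div_kpow j h k' else 0) <= 2 ^+ j * div_kpow j (fun i => h i.-1) k.
Proof.
rewrite /div_kpow => h_ge0; case: k => [|[|k]] /=; first by rewrite mulr0.
  by rewrite mulr_ge0 ?divr_ge0 ?exprn_ge0.
rewrite mulrCA ler_wpM2l // -invf_div lef_pV2 ?posrE ?divr_gt0 ?exprn_gt0 ?ltr0n //.
rewrite ler_pdivrMr ?exprn_gt0 // -exprMn lerXn2r ?nnegrE ?mulr_ge0 //.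
by rewrite -natrM ler_nat; lia.
Qed.

Lemma binom_expect_div_kpowS n p j h : 0 <= p <= 1 -> (forall k, 0 <= h k) ->
  n.+1%:R * p * binom_expect n p (div_kpow j.+1 h) <=
  2 ^+ j.+1 * binom_expect n.+1 p (div_kpow j (fun i => h i.-1)).
Proof.
move=> p01 h_ge0; have /andP[p_ge0 _] := p01.
have np_ge0 : 0 <= n.+1%:R * p by rewrite mulr_ge0.
have div_succ : binom_expect n p (div_kpow j.+1 h) <=
    2 * binom_expect n p (fun k => div_kpow j h k / k.+1%:R).
  by rewrite -binom_expectZ; apply: ler_binom_expect => // k _; apply: div_kpowS_le.
have pred_div : binom_expect n.+1 p (fun k => if k is k'.+1 then div_kpow j h k' else 0)
    <= 2 ^+ j * binom_expect n.+1 p (div_kpow j (fun i => h i.-1)).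
  by rewrite -binom_expectZ; apply: ler_binom_expect => // k _; apply: div_kpow_pred_le.
apply: le_trans (ler_wpM2l np_ge0 div_succ) _.
rewrite mulrCA binom_expect_shift exprS -mulrA.
by apply: ler_wpM2l.
Qed.

(* Iterating the size-biasing step [j] times costs a factor 2^(1 + ... + j). *)
Lemma binom_expect_div_kpow_le j n p h : 0 <= p <= 1 -> (forall k, 0 <= h k) ->
  (n%:R * p) ^+ j * binom_expect n p (div_kpow j h) <=
  2 ^+ 'C(j.+1, 2) * binom_expect (n + j) p (fun k => h (k - j)%N).
Proof.
elim: j n h => [|j IHj] n h p01 h_ge0.
  rewrite !expr0 !mul1r addn0; apply: ler_binom_expect => // k _.
  by rewrite /div_kpow subn0; case: ifP; rewrite ?expr0 ?divr1.
have /andP[p_ge0 _] := p01.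
have np_ge0 : 0 <= n%:R * p by rewrite mulr_ge0.
have np_le : n%:R * p <= n.+1%:R * p by rewrite ler_wpM2r ?ler_nat.
have E_ge0 : 0 <= binom_expect n p (div_kpow j.+1 h).
  apply: binom_expect_ge0 => // k; rewrite /div_kpow.
  by case: ifP => // _; rewrite divr_ge0 ?exprn_ge0.
have np_mono : (n%:R * p) ^+ j.+1 * binom_expect n p (div_kpow j.+1 h) <=
    (n.+1%:R * p) ^+ j * (n.+1%:R * p * binom_expect n p (div_kpow j.+1 h)).
  rewrite exprSr -mulrA; apply: ler_pM; rewrite ?exprn_ge0 ?mulr_ge0 //.
    by rewrite lerXn2r // nnegrE (le_trans np_ge0).
  exact: ler_wpM2r.
apply: (le_trans np_mono).
apply: le_trans (ler_wpM2l _ (binom_expect_div_kpowS n j p01 h_ge0)) _.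
  by rewrite exprn_ge0 // (le_trans np_ge0).
rewrite mulrCA binS bin1 addnC exprD -mulrA; apply: ler_wpM2l; first exact: exprn_ge0.
have shift : binom_expect (n + j.+1) p (fun k => h (k - j).-1) =
    binom_expect (n + j.+1) p (fun k => h (k - j.+1)%N).
  by apply: eq_bigr => k _; rewrite subnS.
by have := IHj n.+1 (fun i => h i.-1) p01 (fun k => h_ge0 _); rewrite addSnnS shift.
Qed.

End inverse_moments.

Section inverse_deviation.
Variable R : realType.
Implicit Types (p s : R).

Lemma inv_dev_le_div_kpow n p q k : 0 < n%:R * p ->
  inv_dev n p q k <=
    ((n%:R * p) ^+ q)^-1 * div_kpow q (fun i => `|n%:R * p - i%:R| ^+ q) k.
Proof.
rewrite /inv_dev /div_kpow; set mu := n%:R * p => mu_gt0.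
case: k => [|k] /=; first by rewrite mulr0.
have -> : k.+1%:R^-1 - mu^-1 = (mu - k.+1%:R) / (k.+1%:R * mu).
  by field; rewrite (gt_eqF mu_gt0) /= addrC natr1 pnatr_eq0.
rewrite expr_div_n [X in _ <= X]mulrC -mulrA -invfM -exprMn.
apply: ler_wpM2r; first by rewrite invr_ge0 exprn_ge0 // mulr_ge0 ?ler0n ?(ltW mu_gt0).
by rewrite -normrX real_ler_norm ?num_real.
Qed.

Lemma binom_expect_inv_dev_le n q p s : 0 <= p <= 1 -> 0 < n%:R * p ->
    0 < s -> s <= 1 / 2 ->
  binom_expect n p (inv_dev n p q) <=
    2 ^+ 'C(q.+1, 2) * (q`!%:R / s ^+ q * (2 * expR (2 * (n%:R * p) * s ^+ 2 + 2 * q%:R)))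
    / (n%:R * p) ^+ (2 * q).
Proof.
move=> p01 mu_gt0 s_gt0 s_le; set mu := n%:R * p in mu_gt0 *.
set M := _ * (2 * _).
set h := fun i => `|mu - i%:R| ^+ q.
have h_ge0 k : 0 <= h k by rewrite exprn_ge0.
have muq_gt0 : 0 < mu ^+ q by rewrite exprn_gt0.
have dev_le : binom_expect n p (inv_dev n p q) <=
    (mu ^+ q)^-1 * binom_expect n p (div_kpow q h).
  by rewrite -binom_expectZ; apply: ler_binom_expect => // k _; apply: inv_dev_le_div_kpow.
have div_le : binom_expect n p (div_kpow q h) <= (mu ^+ q)^-1 * (2 ^+ 'C(q.+1, 2) * M).
  rewrite mulrC ler_pdivlMr // mulrC.
  apply: le_trans (binom_expect_div_kpow_le q n p01 h_ge0) _.
  by apply: ler_wpM2l; [exact: exprn_ge0 | exact: binom_expect_centered_moment_le].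
apply: le_trans (le_trans dev_le (ler_wpM2l _ div_le)) _.
  by rewrite invr_ge0 ltW.
suff -> : 2 ^+ 'C(q.+1, 2) * M / mu ^+ (2 * q) =
    (mu ^+ q)^-1 * ((mu ^+ q)^-1 * (2 ^+ 'C(q.+1, 2) * M)) by [].
by rewrite mul2n -addnn exprD invfM mulrC -mulrA.
Qed.

Definition inv_dev_const (q : nat) (c : R) : R :=
  2 ^+ 'C(q.+1, 2) * (q`!%:R * (2 * expR (c / 2 + 2 * q%:R))) / (Num.sqrt c / 2) ^+ q.

Lemma inv_dev_const_gt0 q c : 0 < c -> 0 < inv_dev_const q c.
Proof.
move=> c_gt0; have sc_gt0 : 0 < Num.sqrt c by rewrite sqrtr_gt0.
by rewrite divr_gt0 ?exprn_gt0 ?divr_gt0 // !mulr_gt0 ?exprn_gt0 ?expR_gt0 ?ltr0n ?fact_gt0.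
Qed.

(* The choice s = sqrt c / (2 sqrt mu) keeps mu s^2 = c / 4 bounded while s <= 1/2. *)
Lemma binom_expect_inv_dev_le_const n q p c : 0 <= p <= 1 -> 0 < c -> c <= n%:R * p ->
  binom_expect n p (inv_dev n p q) <= inv_dev_const q c / Num.sqrt (n%:R * p) ^+ (3 * q).
Proof.
move=> p01 c_gt0 c_le; set mu := n%:R * p in c_le *.
have mu_gt0 : 0 < mu := lt_le_trans c_gt0 c_le.
have sc_gt0 : 0 < Num.sqrt c by rewrite sqrtr_gt0.
set r := Num.sqrt mu; set s := Num.sqrt c / (2 * r).
have r_gt0 : 0 < r by rewrite sqrtr_gt0.
have sqr_r : r ^+ 2 = mu by rewrite sqr_sqrtr ?ltW.
have s_gt0 : 0 < s by rewrite divr_gt0 ?mulr_gt0.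
have s_le : s <= 1 / 2.
  have sc_le : Num.sqrt c <= r by rewrite ler_sqrt ?(ltW mu_gt0).
  by rewrite ler_pdivrMr ?mulr_gt0 //; lra.
have mu_s2 : 2 * mu * s ^+ 2 = c / 2.
  by rewrite /s expr_div_n sqr_sqrtr ?ltW // exprMn sqr_r; field; rewrite gt_eqF.
apply: le_trans (binom_expect_inv_dev_le q p01 mu_gt0 s_gt0 s_le) _.
rewrite -/mu mu_s2 -{1}sqr_r /s /inv_dev_const !expr_div_n exprMn -exprM.
have -> : (2 * (2 * q) = q * 4)%N by rewrite mulnA mulnC.
rewrite [(3 * q)%N]mulnC !exprM.
have rq_neq0 : r ^+ q != 0 by rewrite expf_neq0 ?gt_eqF.
have scq_neq0 : Num.sqrt c ^+ q != 0 by rewrite expf_neq0 ?gt_eqF.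
have twoq_neq0 : 2 ^+ q != 0 :> R by rewrite expf_neq0 ?pnatr_eq0.
move: (2 ^+ 'C(q.+1, 2)) (q`!%:R) (expR _) => A B K.
by rewrite le_eqVlt; apply/predU1P; left; field; rewrite rq_neq0 twoq_neq0.
Qed.

Lemma powR_half_natr (x : R) (m : nat) : 0 <= x -> x `^ (m%:R / 2) = Num.sqrt x ^+ m.
Proof.
by move=> x_ge0; rewrite mulrC powRrM powR12_sqrt // powR_mulrn ?sqrtr_ge0.
Qed.

End inverse_deviation.

Theorem lemma1 (R : realType) (q : nat) (hq : (1 < q)%N) (c : R) (hc : 0 < c) :
  exists C : R, 0 < C /\
    forall (n : nat) (p : R), 0 < p -> p < 1 -> c <= n%:R * p ->
      binom_expect n p (inv_dev n p q) <=
        C * powR (n%:R * p) (- ((3 * q)%:R / 2)).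
Proof.
(* The bound holds for every q. *)
exists (inv_dev_const q c); split; first exact: inv_dev_const_gt0.
move=> n p p_gt0 p_lt1 c_le.
rewrite powRN powR_half_natr ?(le_trans (ltW hc) c_le) //.
by apply: binom_expect_inv_dev_le_const => //; rewrite !ltW.
Qed.
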